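(* Let $C$ be a configuration on the unlabelled complete graph $K_n$ whose distinct stack sizes are $s_1<s_2<\dots<s_N$, with $s_j$ occurring $a_j\ge1$ times. If $C$ is a period configuration of Parallel Diffusion, then $s_{j+1}-s_j\le a_j+a_{j+1}-1$ for every $1\le j\le N-1$.
   Context: Parallel Diffusion on a graph $G$: a configuration assigns an integer stack size $|v|$ to each vertex. One firing step replaces every stack size simultaneously by $|v| + \#\{u\in N(v): |u|>|v|\} - \#\{u\in N(v): |u|<|v|\}$. A period configuration is a configuration $D$ such that repeated firing starting from $D$ returns to $D$ after some positive number of steps (equivalently, $D$ lies in the eventually periodic part of the configuration sequence of some initial configuration). On the complete graph $K_n$ with unlabelled vertices, a configuration is a multiset of $n$ integers. *)

From mathcomp Require Import all_boot all_order all_algebra.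
Set Implicit Arguments. Unset Strict Implicit. Unset Printing Implicit Defensive.
Import Order.TTheory GRing.Theory Num.Theory.
Local Open Scope ring_scope.

(* A configuration on the unlabelled complete graph K_n is a multiset of n
   integers, represented by a sequence (up to permutation, i.e. perm_eq). *)

(* One parallel-diffusion firing step on K_n: every vertex gains one chip for
   each strictly larger neighbour and loses one for each strictly smaller one.
   (On K_n every other vertex is a neighbour; the vertex itself is neither
   strictly larger nor strictly smaller, so counting over all of C is exact.) *)
Definition fire (C : seq int) : seq int :=
  [seq x + (count (fun y => x < y) C)%:Z - (count (fun y => y < x) C)%:Z | x <- C].

Definition period_config (D : seq int) : Prop :=
  exists k : nat, (0 < k)%N /\ perm_eq (iter k fire D) D.

Definition distinct_sizes (C : seq int) : seq int := sort <=%R (undup C).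

From mathcomp Require Import all_boot all_order all_algebra.
From mathcomp Require Import ring zify.
Import Order.TTheory GRing.Theory Num.Theory.
Set Implicit Arguments. Unset Strict Implicit.
Local Open Scope ring_scope.

(* Write F = diffuse C for the update map x |-> x + #{y > x} - #{y < x}.
   Two quantities never increase under firing and are invariant under
   permutation, hence are constant along a period:
   - the energy E(C) = sum_x x * F x, because
       2 (E(C) - E(fire C)) = sum_{x,y} (F y - F x) (sgn x y + sgn (F x) (F y))
     and every summand is nonnegative;
   - the number of distinct stack sizes, because firing is a map on them.
   Constancy of the first quantity forces each summand to vanish, constancy
   of the second forces F to be injective on C; together they show that F
   strictly reverses the order of any two distinct stack sizes of C.
   For consecutive sizes s_j < s_(j+1) one computes directly
     F s_(j+1) - F s_j = s_(j+1) - s_j - a_j - a_(j+1),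
   and negativity of this difference is exactly the claimed bound. *)

Definition diffuse (s : seq int) (x : int) : int :=
  x + (count (fun y => x < y) s)%:Z - (count (fun y => y < x) s)%:Z.

Lemma fire_diffuse (s : seq int) : fire s = map (diffuse s) s.
Proof. by []. Qed.

Definition b2z (b : bool) : int := if b then 1 else 0.

Definition sgn (x y : int) : int := b2z (x < y) - b2z (y < x).

Lemma sgn_anti (x y : int) : sgn x y = - sgn y x.
Proof. by rewrite /sgn opprB. Qed.

Lemma count_b2z (T : Type) (P : pred T) (s : seq T) :
  (count P s)%:Z = \sum_(y <- s) b2z (P y).
Proof.
elim: s => [|a s IH] /=; first by rewrite big_nil.
by rewrite big_cons PoszD IH; case: (P a).
Qed.

Lemma diffuseE (s : seq int) (x : int) :
  diffuse s x = x + \sum_(y <- s) sgn x y.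
Proof. by rewrite /diffuse /sgn sumrB -!count_b2z addrA. Qed.

Lemma diffuse_perm (s t : seq int) : perm_eq s t -> diffuse s =1 diffuse t.
Proof. by move/permP => st x; rewrite /diffuse !st. Qed.

Definition energy (s : seq int) : int := \sum_(x <- s) x * diffuse s x.

Lemma energy_perm (s t : seq int) : perm_eq s t -> energy s = energy t.
Proof.
move=> st; rewrite /energy (perm_big t st); apply: eq_bigr => x _.
by rewrite (diffuse_perm st).
Qed.

Definition pair_term (x y u v : int) : int := (v - u) * (sgn x y + sgn u v).

Lemma pair_term_ge0 (x y u v : int) : 0 <= pair_term x y u v.
Proof.
rewrite /pair_term /sgn /b2z.
by case: (ltrgtP x y) => _; case: (ltrgtP u v) => h //=; lia.
Qed.

Lemma energy_drop (s : seq int) (F := diffuse s) :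
  2 * (energy s - energy (fire s)) =
  \sum_(x <- s) \sum_(y <- s) pair_term x y (F x) (F y).
Proof.
set A := \sum_(x <- s) \sum_(y <- s) F x * (sgn x y + sgn (F x) (F y)).
have loss : energy s - energy (fire s) = - A.
  rewrite /energy fire_diffuse big_map -sumrB /A -sumrN.
  apply: eq_bigr => x _.
  have own : \sum_(y <- s) sgn x y = F x - x by rewrite /F diffuseE; ring.
  have next : diffuse (map F s) (F x) = F x + \sum_(y <- s) sgn (F x) (F y).
    by rewrite diffuseE big_map.
  rewrite next -[in RHS]mulr_sumr [in RHS]big_split /= own.
  move: (\sum_(y <- s) sgn (F x) (F y)) => B.
  by rewrite /F; ring.
have swap : \sum_(x <- s) \sum_(y <- s) F y * (sgn x y + sgn (F x) (F y)) = - A.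
  rewrite exchange_big /A -sumrN; apply: eq_bigr => y _.
  rewrite -sumrN; apply: eq_bigr => x _.
  by rewrite [sgn x y]sgn_anti [sgn (F x) (F y)]sgn_anti; ring.
rewrite /pair_term.
under eq_bigr do under eq_bigr do rewrite mulrBl.
under eq_bigr do rewrite sumrB.
by rewrite sumrB swap loss; ring.
Qed.

Lemma energy_fire_le (s : seq int) : energy (fire s) <= energy s.
Proof.
have : 0 <= 2 * (energy s - energy (fire s)).
  rewrite energy_drop; apply: sumr_ge0 => x _; apply: sumr_ge0 => y _.
  exact: pair_term_ge0.
lia.
Qed.

Lemma psum_eq0_in (I : eqType) (R : numDomainType) (s : seq I) (T : I -> R)
    (x : I) :
  (forall y, 0 <= T y) -> \sum_(y <- s) T y = 0 -> x \in s -> T x = 0.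
Proof.
move=> T_ge0 sum0 xs; move: sum0; rewrite (big_rem x xs) /=.
move/eqP; rewrite paddr_eq0 ?T_ge0 //; last exact: sumr_ge0.
by case/andP => /eqP.
Qed.

Lemma period_invariant (disp : Order.disp_t) (T : porderType disp)
    (phi : seq int -> T) (C : seq int) :
  (forall s t, perm_eq s t -> phi s = phi t) ->
  (forall s, (phi (fire s) <= phi s)%O) ->
  period_config C -> phi (fire C) = phi C.
Proof.
move=> phi_perm phi_fire [k [k_gt0 back]].
pose h t := phi (iter t fire C).
have h_mono t : (h t.+1 <= h t)%O by rewrite /h iterS phi_fire.
have h_le1 t : (0 < t)%N -> (h t <= h 1%N)%O.
  elim: t => [//|[|t] IH] _ //; exact: le_trans (h_mono _) (IH isT).
apply/le_anti; rewrite phi_fire /=.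
by rewrite -[X in (X <= _)%O](phi_perm _ _ back); exact: h_le1.
Qed.

Lemma period_pair_term0 (C : seq int) (x y : int) :
  period_config C -> x \in C -> y \in C ->
  pair_term x y (diffuse C x) (diffuse C y) = 0.
Proof.
move=> per xC yC.
have stable := period_invariant energy_perm energy_fire_le per.
have loss0 := energy_drop C; rewrite stable subrr mulr0 in loss0.
have row0 := psum_eq0_in
  (fun x => sumr_ge0 _ (fun y _ => pair_term_ge0 x y _ _)) (esym loss0) xC.
exact: psum_eq0_in (fun y => pair_term_ge0 _ _ _ _) row0 yC.
Qed.

Lemma uniq_map_inj_in (T1 T2 : eqType) (f : T1 -> T2) (s : seq T1) :
  uniq (map f s) -> {in s &, injective f}.
Proof.
elim: s => [//|a s IH] /= /andP [fa_new U] x y.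
rewrite !inE => /orP [/eqP-> | xs] /orP [/eqP-> | ys] // fxy.
- by rewrite fxy map_f in fa_new.
- by rewrite -fxy map_f in fa_new.
- exact: IH.
Qed.

Definition distinct_count (T : eqType) (s : seq T) : nat := size (undup s).

Lemma distinct_count_map (T1 T2 : eqType) (f : T1 -> T2) (s : seq T1) :
  distinct_count (map f s) = size (undup (map f (undup s))).
Proof.
apply: perm_size; apply: perm_undup => z.
by apply/mapP/mapP => [[w ws ->]|[w ws ->]]; exists w; rewrite ?mem_undup in ws *.
Qed.

Lemma distinct_count_map_le (T1 T2 : eqType) (f : T1 -> T2) (s : seq T1) :
  (distinct_count (map f s) <= distinct_count s)%N.
Proof.
by rewrite distinct_count_map /distinct_count -(size_map f (undup s)) size_undup.
Qed.

Lemma distinct_count_map_inj (T1 T2 : eqType) (f : T1 -> T2) (s : seq T1) :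
  distinct_count (map f s) = distinct_count s -> {in s &, injective f}.
Proof.
rewrite distinct_count_map /distinct_count -(size_map f (undup s)) => same.
have U : uniq (map f (undup s)) by rewrite -[uniq _]negbK -ltn_size_undup same ltnn.
by move=> x y xs ys; apply: (uniq_map_inj_in U); rewrite mem_undup.
Qed.

Lemma period_diffuse_inj (C : seq int) :
  period_config C -> {in C &, injective (diffuse C)}.
Proof.
move=> per; apply: distinct_count_map_inj; rewrite -fire_diffuse.
have := @period_invariant _ nat (@distinct_count _) C; apply => //.
- by move=> s t st; apply: perm_size; exact: perm_undup (perm_mem st).
- by move=> s; rewrite fire_diffuse leEnat distinct_count_map_le.
Qed.

Lemma period_diffuse_reverse (C : seq int) (x y : int) :
  period_config C -> x \in C -> y \in C -> x < y ->
  diffuse C y < diffuse C x.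
Proof.
move=> per xC yC xy.
have term0 := period_pair_term0 per xC yC.
have neq : diffuse C x != diffuse C y.
  by apply: contraTneq xy => /(period_diffuse_inj per xC yC) ->; rewrite ltxx.
move: term0 neq; rewrite /pair_term /sgn /b2z xy (lt_gtF xy) /=.
by case: (ltrgtP (diffuse C x) (diffuse C y)) => h //=; lia.
Qed.

(* For consecutive stack sizes v1 < v2 of s, only the stacks of these two
   sizes contribute to the difference of their updates. *)
Lemma diffuse_consecutive (s : seq int) (v1 v2 : int) :
  v1 < v2 -> (forall y, y \in s -> ~~ (v1 < y < v2)) ->
  diffuse s v2 - diffuse s v1 =
  v2 - v1 - (count_mem v1 s)%:Z - (count_mem v2 s)%:Z.
Proof.
move=> v12 gap.
have local : forall y, y \in s ->
    sgn v2 y = sgn v1 y - (b2z (y == v1) + b2z (y == v2)).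
  move=> y /gap; rewrite /sgn /b2z.
  by case: (ltrgtP v1 y) => h1; case: (ltrgtP v2 y) => h2 //=;
    rewrite ?(eq_sym y) ?(gt_eqF h1) ?(lt_eqF h1) ?(gt_eqF h2) ?(lt_eqF h2)
      ?h1 ?h2 ?eqxx /=; lia.
rewrite !diffuseE !count_b2z.
have -> : \sum_(y <- s) sgn v2 y =
    \sum_(y <- s) sgn v1 y -
    (\sum_(y <- s) b2z (y == v1) + \sum_(y <- s) b2z (y == v2)).
  by rewrite -big_split -sumrB; apply: eq_big_seq.
ring.
Qed.

Lemma distinct_sizes_consecutive (C : seq int) (j : nat)
    (D := distinct_sizes C) :
  (j.+1 < size D)%N ->
  [/\ nth 0 D j < nth 0 D j.+1, nth 0 D j \in C, nth 0 D j.+1 \in C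
    & forall y, y \in C -> ~~ (nth 0 D j < y < nth 0 D j.+1)].
Proof.
move=> jD.
have sortedD : sorted <%R D by rewrite /D sort_lt_sorted undup_uniq.
have memD y : (y \in D) = (y \in C) by rewrite mem_sort mem_undup.
have ltD i k : (i < size D)%N -> (k < size D)%N ->
    (nth 0 D i < nth 0 D k) = (i < k)%N.
  by move=> iD kD; rewrite (lt_sorted_ltn_nth 0 sortedD).
split; rewrite -?memD ?mem_nth ?ltD ?(ltnW jD) //.
move=> y; rewrite -memD => yD; rewrite -(nth_index 0 yD).
by rewrite !ltD ?index_mem ?(ltnW jD) //; lia.
Qed.

Theorem mainTheorem4 (n : nat) (C : seq int) :
  size C = n ->
  period_config C ->
  forall j : nat, (j.+1 < size (distinct_sizes C))%N ->
    nth 0 (distinct_sizes C) j.+1 - nth 0 (distinct_sizes C) j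
      <= (count_mem (nth 0 (distinct_sizes C) j) C)%:Z
         + (count_mem (nth 0 (distinct_sizes C) j.+1) C)%:Z - 1.
Proof.
move=> _ per j jD.
set v1 := nth 0 (distinct_sizes C) j; set v2 := nth 0 (distinct_sizes C) j.+1.
case: (distinct_sizes_consecutive jD) => v12 v1C v2C gap.
have rev := period_diffuse_reverse per v1C v2C v12.
rewrite -subr_lt0 (diffuse_consecutive v12 gap) in rev.
by move: rev; move: (count_mem v1 C) (count_mem v2 C) => a1 a2; lia.
Qed.
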